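(* There are $\mathfrak{c}$ many infinite subsets of $\omega$ which are pairwise almost oscillating.
   Context: Two sets $A, B \subseteq \omega$ are oscillating if for every two-element set $\{x, y\} \subseteq A$ and every two-element set $\{w, z\} \subseteq B$ we have $|y - x| \neq |z - w|$. They are almost oscillating if there is $n \in \omega$ such that $A \setminus n$ and $B \setminus n$ are oscillating (here $n = \{0, \dots, n-1\}$). $\mathfrak{c}$ denotes the cardinality of the continuum. *)

From Stdlib Require Import Arith.

Definition absdiff (x y : nat) : nat := (x - y) + (y - x).

Definition oscillating (A B : nat -> Prop) : Prop :=
  forall x y w z : nat,
    A x -> A y -> x <> y -> B w -> B z -> w <> z ->
    absdiff y x <> absdiff z w.

Definition setminus_init (A : nat -> Prop) (n : nat) : nat -> Prop :=
  fun x => A x /\ n <= x.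

Definition almost_oscillating (A B : nat -> Prop) : Prop :=
  exists n : nat, oscillating (setminus_init A n) (setminus_init B n).

Definition infinite_set (A : nat -> Prop) : Prop :=
  forall n : nat, exists m : nat, n <= m /\ A m.

(* Distinct powers of a base q >= 3 have pairwise distinct differences, so two
   sets of such powers are oscillating as soon as they are disjoint.  Send a
   branch s of the complete binary tree to the set of 3^v for v a node on s;
   two different branches share no node past the level where they split, so
   their sets are disjoint above some point, hence almost oscillating.  The map
   is injective because an infinite set is not almost oscillating with itself. *)

From Stdlib Require Import Arith Lia Classical FunctionalExtensionality.

Lemma pow_sub_pow_bounds q a b :
  3 <= q -> b < a -> 2 * q ^ (a - 1) <= q ^ a - q ^ b < q ^ a.
Proof.
  intros Hq Hba.
  destruct a as [|a]; [lia|].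
  replace (S a - 1) with a by lia.
  assert (q ^ b <= q ^ a) by (apply Nat.pow_le_mono_r; lia).
  assert (0 < q ^ b) by (apply Nat.neq_0_lt_0, Nat.pow_nonzero; lia).
  rewrite Nat.pow_succ_r'.
  nia.
Qed.

Lemma pow_sub_pow_inj q a b c d :
  3 <= q -> b < a -> d < c -> q ^ a - q ^ b = q ^ c - q ^ d -> a = c /\ b = d.
Proof.
  intros Hq Hba Hdc E.
  pose proof (pow_sub_pow_bounds q a b Hq Hba).
  pose proof (pow_sub_pow_bounds q c d Hq Hdc).
  assert (Hac : a = c).
  { destruct (lt_eq_lt_dec a c) as [[Hlt|Heq]|Hlt]; [|exact Heq|].
    - assert (q ^ a <= q ^ (c - 1)) by (apply Nat.pow_le_mono_r; lia). lia.
    - assert (q ^ c <= q ^ (a - 1)) by (apply Nat.pow_le_mono_r; lia). lia. }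
  subst c; split; [reflexivity|].
  assert (q ^ b < q ^ a) by (apply Nat.pow_lt_mono_r; lia).
  assert (q ^ d < q ^ a) by (apply Nat.pow_lt_mono_r; lia).
  apply (Nat.pow_inj_r q); lia.
Qed.

Lemma absdiff_pow_inj q a b c d :
  3 <= q -> a <> b -> c <> d ->
  absdiff (q ^ b) (q ^ a) = absdiff (q ^ d) (q ^ c) ->
  (a = c /\ b = d) \/ (a = d /\ b = c).
Proof.
  unfold absdiff; intros Hq Hab Hcd E.
  destruct (Nat.lt_gt_cases a b) as [[Hlt1|Hlt1] _]; [exact Hab| |];
  destruct (Nat.lt_gt_cases c d) as [[Hlt2|Hlt2] _]; try exact Hcd;
  pose proof (Nat.pow_lt_mono_r q _ _ ltac:(lia) Hlt1);
  pose proof (Nat.pow_lt_mono_r q _ _ ltac:(lia) Hlt2).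
  - destruct (pow_sub_pow_inj q b a d c); auto; lia.
  - destruct (pow_sub_pow_inj q b a c d); auto; lia.
  - destruct (pow_sub_pow_inj q a b d c); auto; lia.
  - destruct (pow_sub_pow_inj q a b c d); auto; lia.
Qed.

Lemma oscillating_of_disjoint_powers q (A B : nat -> Prop) :
  3 <= q ->
  (forall x, A x -> exists n, x = q ^ n) ->
  (forall x, B x -> exists n, x = q ^ n) ->
  (forall x, A x -> B x -> False) ->
  oscillating A B.
Proof.
  intros Hq powA powB disjAB x y w z Ax Ay Hxy Bw Bz Hwz E.
  destruct (powA x Ax) as [a ->], (powA y Ay) as [b ->].
  destruct (powB w Bw) as [c ->], (powB z Bz) as [d ->].
  assert (a <> b) by (intros ->; contradiction).
  assert (c <> d) by (intros ->; contradiction).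
  destruct (absdiff_pow_inj q a b c d) as [[-> _]|[-> _]]; auto.
  - exact (disjAB _ Ax Bw).
  - exact (disjAB _ Ax Bz).
Qed.

Lemma not_almost_oscillating_self (A : nat -> Prop) :
  infinite_set A -> ~ almost_oscillating A A.
Proof.
  intros infA [n Hosc].
  destruct (infA n) as [x [Hnx Ax]].
  destruct (infA (S x)) as [y [Hxy Ay]].
  assert (Sx : setminus_init A n x) by (split; [exact Ax | exact Hnx]).
  assert (Sy : setminus_init A n y) by (split; [exact Ay | lia]).
  exact (Hosc x y x y Sx Sy ltac:(lia) Sx Sy ltac:(lia) eq_refl).
Qed.

(* [branch_node s n] is the depth-n node of the branch [s] of the complete
   binary tree numbered from the root 1, the children of v being 2v and 2v+1. *)
Fixpoint branch_node (s : nat -> bool) (n : nat) : nat :=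
  match n with
  | 0 => 1
  | S n' => 2 * branch_node s n' + (if s n' then 1 else 0)
  end.

Lemma branch_node_bounds s n : 2 ^ n <= branch_node s n < 2 ^ S n.
Proof.
  induction n as [|n IH]; simpl in *; [lia|].
  destruct (s n); lia.
Qed.

Lemma branch_node_depth_inj s t n m : branch_node s n = branch_node t m -> n = m.
Proof.
  intros E.
  pose proof (branch_node_bounds s n); pose proof (branch_node_bounds t m).
  destruct (lt_eq_lt_dec n m) as [[Hlt|Heq]|Hlt]; [|exact Heq|].
  - assert (2 ^ S n <= 2 ^ m) by (apply Nat.pow_le_mono_r; lia). lia.
  - assert (2 ^ S m <= 2 ^ n) by (apply Nat.pow_le_mono_r; lia). lia.
Qed.

Lemma branch_node_eq_agree s t n :
  branch_node s n = branch_node t n -> forall i, i < n -> s i = t i.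
Proof.
  induction n as [|n IH]; intros E i Hi; [lia|].
  simpl in E.
  assert (Hn : s n = t n /\ branch_node s n = branch_node t n)
    by (destruct (s n), (t n); split; auto; lia).
  destruct Hn as [Hn Hprev].
  destruct (Nat.eq_dec i n) as [->|Hne]; [exact Hn|].
  apply IH; [exact Hprev | lia].
Qed.

Definition branch_set (s : nat -> bool) : nat -> Prop :=
  fun x => exists n, x = 3 ^ branch_node s n.

Lemma branch_set_infinite s : infinite_set (branch_set s).
Proof.
  intro n. exists (3 ^ branch_node s n). split; [|exists n; reflexivity].
  pose proof (branch_node_bounds s n).
  assert (n < 2 ^ n) by (apply Nat.pow_gt_lin_r; lia).
  assert (branch_node s n < 3 ^ branch_node s n) by (apply Nat.pow_gt_lin_r; lia).
  lia.
Qed.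

Lemma branch_set_common_lt s t k x :
  s k <> t k -> branch_set s x -> branch_set t x -> x < 3 ^ 2 ^ S k.
Proof.
  intros Hk [n ->] [m E].
  apply Nat.pow_inj_r in E; [|lia].
  pose proof (branch_node_depth_inj s t n m E); subst m.
  assert (Hnk : n <= k).
  { destruct (le_lt_dec n k) as [Hle|Hlt]; [exact Hle|].
    contradiction (Hk (branch_node_eq_agree s t n E k Hlt)). }
  pose proof (branch_node_bounds s n).
  assert (2 ^ S n <= 2 ^ S k) by (apply Nat.pow_le_mono_r; lia).
  apply Nat.pow_lt_mono_r; lia.
Qed.

Lemma branch_set_almost_oscillating s t :
  s <> t -> almost_oscillating (branch_set s) (branch_set t).
Proof.
  intros Hst.
  destruct (not_all_ex_not _ _ (fun H => Hst (functional_extensionality s t H)))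
    as [k Hk].
  exists (3 ^ 2 ^ S k).
  apply (oscillating_of_disjoint_powers 3); [lia | | |].
  - intros x [[n ->] _]; exists (branch_node s n); reflexivity.
  - intros x [[n ->] _]; exists (branch_node t n); reflexivity.
  - intros x [Sx Hx] [Tx _].
    pose proof (branch_set_common_lt s t k x Hk Sx Tx); lia.
Qed.

Theorem proposition10 :
  exists F : (nat -> bool) -> (nat -> Prop),
    (forall s t : nat -> bool, F s = F t -> s = t) /\
    (forall s : nat -> bool, infinite_set (F s)) /\
    (forall s t : nat -> bool, s <> t -> almost_oscillating (F s) (F t)).
Proof.
  exists branch_set.
  split; [|split; [exact branch_set_infinite | exact branch_set_almost_oscillating]].
  intros s t E.
  apply NNPP; intro Hst.
  pose proof (branch_set_almost_oscillating s t Hst) as Hosc.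
  rewrite <- E in Hosc.
  exact (not_almost_oscillating_self _ (branch_set_infinite s) Hosc).
Qed.
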